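(* Let $X$ be a finite alphabet with at least two letters, $k\ge2$, $\mathcal M$ an automaton over $X$, $A:C_{\mathcal M}\to\bar k$, and $(F,c)\in\mathcal F_{\mathcal T_k}$. If $F\le_h(C_{\mathcal M};\le_0,\le_1,A)$, then $B\le_{CA}A\circ f_{\mathcal M}$ for every $B\in\mathbf\Sigma(F)$.
   Context: $f_{\mathcal M}(\xi)$ is the set of states visited infinitely often on input $\xi$; $C_{\mathcal M}=\{f_{\mathcal M}(\xi):\xi\in X^\omega\}$; $c\le_0 d$ iff the states of $d$ are reachable from those of $c$; $c\le_1d$ iff $c\supseteq d$; $[c]_0$ is the $\equiv_0$-class of $c$. Forests: finite $F\subseteq\omega^+$ closed under nonempty prefixes (prefix order); trees: finite prefix-closed $V\subseteq\omega^*$; $\mathcal F_{\mathcal T_k}$: forests labeled by $\bar k$-labeled trees $(V,v)$. $F\le_h(C_{\mathcal M};\le_0,\le_1,A)$ means: there is a monotone $\varphi:(F,\sqsubseteq)\to(C_{\mathcal M};\le_0)$ such that for every $\tau\in F$ with $c(\tau)=(V,v)$ there is a monotone $\psi:(V,\sqsubseteq)\to([\varphi(\tau)]_0;\le_1)$ with $v(\sigma)=A(\psi(\sigma))$ for all $\sigma\in V$. $B\le_{CA}D$ iff $B=D\circ g$ for a continuous $g:X^\omega\to X^\omega$. $\mathbf\Sigma(F)$: the set of $k$-partitions determined by some $F$-family over the 2-base $(\mathbf\Sigma^0_1,\mathbf\Sigma^0_2)$ (open sets, countable unions of closed sets), where an $F$-family is $\{U_\tau\}_{\tau\in F}$ open,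 $U_{\tau i}\subseteq U_\tau$, $\bigcup U_\tau=X^\omega$, plus for each $\tau$ with $c(\tau)=(V,v)$ sets $U_{\tau\sigma}=\tilde U_\tau\cap B_{\tau\sigma}$, $B_{\tau\sigma}\in\mathbf\Sigma^0_2$, $U_{\tau\sigma i}\subseteq U_{\tau\sigma}$, $\bigcup_\sigma U_{\tau\sigma}=\tilde U_\tau$ (with $\tilde U_\tau=U_\tau\setminus\bigcup_{\tau i\in F}U_{\tau i}$), and it determines $B$ if $B(x)=v(\sigma)$ whenever $x\in U_{\tau\sigma}\setminus\bigcup_{\sigma i\in V}U_{\tau\sigma i}$. *)

From mathcomp Require Import all_boot.
From mathcomp Require Import boolp.
Set Implicit Arguments. Unset Strict Implicit. Unset Printing Implicit Defensive.

Definition word (X : Type) := nat -> X.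

Definition openw (X : Type) (U : word X -> Prop) : Prop :=
  forall x, U x -> exists n, forall y, (forall m, m < n -> y m = x m) -> U y.

Definition closedw (X : Type) (C : word X -> Prop) : Prop :=
  openw (fun x => ~ C x).

Definition sigma02 (X : Type) (S : word X -> Prop) : Prop :=
  exists Cs : nat -> word X -> Prop,
    (forall n, closedw (Cs n)) /\ (forall x, S x <-> exists n, Cs n x).

Definition continuousw (X : Type) (g : word X -> word X) : Prop :=
  forall U, openw U -> openw (fun x => U (g x)).

Record automaton (X : finType) := Automaton {
  state : finType;
  init : state;
  delta : state -> X -> state }.

Section Aut.
Variables (X : finType) (M : automaton X).

Fixpoint run (xi : word X) (n : nat) : state M :=
  if n is m.+1 then delta (run xi m) (xi m) else init M.

Definition fM (xi : word X) : {set state M} :=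
  [set q | `[< forall n, exists m, n <= m /\ run xi m = q >]].

Definition inCM (c : {set state M}) : Prop := exists xi, fM xi = c.

Definition edge : rel (state M) := fun p q => [exists x, q == delta p x].
Definition reach (p q : state M) : bool := connect edge p q.

Definition le0 (c d : {set state M}) : Prop :=
  forall p q, p \in c -> q \in d -> reach p q.
Definition equiv0 (c d : {set state M}) : Prop := le0 c d /\ le0 d c.
Definition le1 (c d : {set state M}) : Prop := d \subset c.
Definition in_class0 (c d : {set state M}) : Prop := inCM d /\ equiv0 d c.
End Aut.

Definition is_forest (F : seq (seq nat)) : Prop :=
  (forall tau, tau \in F -> tau != [::]) /\
  (forall tau sigma, tau \in F -> sigma != [::] -> prefix sigma tau -> sigma \in F).

Definition is_tree (V : seq (seq nat)) : Prop :=
  forall sigma rho, sigma \in V -> prefix rho sigma -> rho \in V.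

(* a k-labeled tree (V, v) with v : V -> {0..k-1} (v given as a total function,
   only its values on V matter) *)
Definition ltree (k : nat) := (seq (seq nat) * (seq nat -> 'I_k))%type.

Definition is_lforest (k : nat) (F : seq (seq nat)) (c : seq nat -> ltree k) : Prop :=
  is_forest F /\ (forall tau, tau \in F -> is_tree (c tau).1).

Definition h_le (X : finType) (M : automaton X) (k : nat)
    (A : {set state M} -> 'I_k) (F : seq (seq nat)) (c : seq nat -> ltree k) : Prop :=
  exists phi : seq nat -> {set state M},
    (forall tau, tau \in F -> inCM (phi tau)) /\
    (forall tau tau', tau \in F -> tau' \in F -> prefix tau tau' ->
        le0 (phi tau) (phi tau')) /\
    (forall tau, tau \in F ->
      exists psi : seq nat -> {set state M},
        (forall sigma, sigma \in (c tau).1 -> in_class0 (phi tau) (psi sigma)) /\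
        (forall sigma sigma', sigma \in (c tau).1 -> sigma' \in (c tau).1 ->
            prefix sigma sigma' -> le1 (psi sigma) (psi sigma')) /\
        (forall sigma, sigma \in (c tau).1 -> (c tau).2 sigma = A (psi sigma))).

Section Family.
Variables (X : finType) (k : nat) (F : seq (seq nat)) (c : seq nat -> ltree k).
Variables (U : seq nat -> word X -> Prop) (Bs : seq nat -> seq nat -> word X -> Prop).

Definition Utilde (tau : seq nat) (x : word X) : Prop :=
  U tau x /\ (forall i, rcons tau i \in F -> ~ U (rcons tau i) x).

Definition Uts (tau sigma : seq nat) (x : word X) : Prop :=
  Utilde tau x /\ Bs tau sigma x.

Definition is_family : Prop :=
  (forall tau, tau \in F -> openw (U tau)) /\
  (forall tau i, tau \in F -> rcons tau i \in F ->
      forall x, U (rcons tau i) x -> U tau x) /\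
  (forall x, exists2 tau, tau \in F & U tau x) /\
  (forall tau, tau \in F ->
     (forall sigma, sigma \in (c tau).1 -> sigma02 (Bs tau sigma)) /\
     (forall sigma i, sigma \in (c tau).1 -> rcons sigma i \in (c tau).1 ->
        forall x, Uts tau (rcons sigma i) x -> Uts tau sigma x) /\
     (forall x, Utilde tau x <-> exists2 sigma, sigma \in (c tau).1 & Uts tau sigma x)).

Definition determines (B : word X -> 'I_k) : Prop :=
  forall tau sigma x, tau \in F -> sigma \in (c tau).1 ->
    Uts tau sigma x ->
    (forall i, rcons sigma i \in (c tau).1 -> ~ Uts tau (rcons sigma i) x) ->
    B x = (c tau).2 sigma.
End Family.

Definition SigmaF (X : finType) (k : nat) (F : seq (seq nat)) (c : seq nat -> ltree k)
    (B : word X -> 'I_k) : Prop :=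
  exists (U : seq nat -> word X -> Prop) (Bs : seq nat -> seq nat -> word X -> Prop),
    is_family F c U Bs /\ determines F c U Bs B.

Definition le_CA (X : finType) (k : nat) (B D : word X -> 'I_k) : Prop :=
  exists g : word X -> word X, continuousw g /\ B = D \o g.

(* The reduction reads longer and longer prefixes of x and writes, block by block, an input
   word for M. It keeps a current node tau of F and moves to a child t of tau (to any node of F
   at the start) as soon as the prefix read forces x into the open set U_t, steering M into
   phi(t), which is reachable by <=_0-monotonicity of phi. As F is finite, the node settles at
   the tau with x in U_tau minus the U_{tau i}. From then on every block follows a guess sigma
   in the tree of tau, computed from the closed pieces of the Sigma^0_2 sets B_{tau sigma}:
   the guesses eventually stay below the leaf sigma that determines B(x) and return to it
   infinitely often. A block for sigma runs through all of psi(sigma), which is possible as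
   psi(sigma) lies in [phi(tau)]_0, and stays in psi of the common prefix of the previous and
   the current guess, which lies in psi(sigma) by <=_1-monotonicity. So M visits exactly the
   states of psi(sigma) infinitely often, and A(psi(sigma)) = v(sigma) = B(x). *)

From mathcomp Require Import all_boot boolp zify.
From mathcomp Require classical_sets.
Set Implicit Arguments. Unset Strict Implicit. Unset Printing Implicit Defensive.

Lemma bounded_witnesses (T : eqType) (l : seq T) (P : T -> nat -> Prop) :
  (forall a, a \in l -> exists m, P a m) ->
  exists N, forall a, a \in l -> exists2 m, m <= N & P a m.
Proof.
elim: l => [|b l IH] H; first by exists 0.
have [N HN] := IH (fun a ha => H a (mem_behead (ha : a \in behead (b :: l)))).
have [mb Hb] := H b (mem_head _ _).
exists (maxn N mb) => a; rewrite inE => /orP [/eqP -> | ha].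
  by exists mb => //; rewrite leq_maxr.
by have [m hm Pm] := HN a ha; exists m => //; rewrite leq_max hm.
Qed.

Lemma eventually_all_in (T : eqType) (l : seq T) (P : nat -> T -> Prop) :
  (forall a, a \in l -> exists s0, forall s, s0 <= s -> P s a) ->
  exists s0, forall s, s0 <= s -> forall a, a \in l -> P s a.
Proof.
move=> /bounded_witnesses [N HN]; exists N => s hs a ha.
by have [m hm Pm] := HN a ha; apply: Pm; exact: leq_trans hs.
Qed.

Lemma nondecreasing_bounded_stable (f : nat -> nat) N :
  (forall s, f s <= f s.+1) -> (forall s, f s <= N) ->
  exists s0, forall s, s0 <= s -> f s = f s0.
Proof.
move=> f_mono f_bound.
have hex : exists v, `[< exists s, f s = v >] by exists (f 0); apply/asboolP; exists 0.
have hub v : `[< exists s, f s = v >] -> v <= N by move=> /asboolP [s <-].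
case: (ex_maxnP hex hub) => v /asboolP [s0 <-] vmax; exists s0 => s hs.
apply/eqP; rewrite eqn_leq (homo_leq leqnn (fun _ _ _ => @leq_trans _ _ _) f_mono hs) andbT.
by apply: vmax; apply/asboolP; exists s.
Qed.

Lemma prefix_size_le (T : eqType) (a b z : seq T) :
  prefix a z -> prefix b z -> size a <= size b -> prefix a b.
Proof.
elim: z a b => [|y z IH] [|u a] [|v b] //=.
by move=> /andP [/eqP -> h1] /andP [/eqP -> h2]; rewrite ltnS eqxx /=; exact: IH.
Qed.

Lemma prefix_size_eq (T : eqType) (a b : seq T) : prefix a b -> size b <= size a -> a = b.
Proof.
move=> hab hs; have e : size a = size b by apply/eqP; rewrite eqn_leq size_prefix.
by move: hab; rewrite prefixE e take_size => /eqP.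
Qed.

Fixpoint lcp (T : eqType) (s t : seq T) : seq T :=
  match s, t with
  | a :: s', b :: t' => if a == b then a :: lcp s' t' else [::]
  | _, _ => [::]
  end.

Lemma lcp_prefixl (T : eqType) (s t : seq T) : prefix (lcp s t) s.
Proof. elim: s t => [|a s IH] [|b t] //=; case: eqP => //= _; by rewrite eqxx IH. Qed.

Lemma lcp_prefixr (T : eqType) (s t : seq T) : prefix (lcp s t) t.
Proof. elim: s t => [|a s IH] [|b t] //=; case: eqP => //= ->; by rewrite eqxx IH. Qed.

Lemma prefix_lcp (T : eqType) (r s t : seq T) :
  prefix r s -> prefix r t -> prefix r (lcp s t).
Proof.
elim: s r t => [|a s IH] [|u r] [|b t] //=; rewrite ?prefix0s //.
by move=> /andP [/eqP -> h1] /andP [/eqP -> h2]; rewrite eqxx /= eqxx; exact: IH.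
Qed.

Definition is_child (T : eqType) (t t' : seq T) := (size t' == (size t).+1) && prefix t t'.

Lemma is_childP (T : eqType) (t t' : seq T) : is_child t t' -> exists i, t' = rcons t i.
Proof.
move=> /andP [/eqP hs /prefixP [[|i [|j s2]] e]]; move: hs; rewrite e size_cat /=; try lia.
by exists i; rewrite cats1.
Qed.

Lemma is_child_rcons (T : eqType) (t : seq T) i : is_child t (rcons t i).
Proof. by rewrite /is_child size_rcons eqxx prefix_rcons. Qed.

Section Walks.
Variables (X : finType) (M : automaton X).
Implicit Types (p q r : state M) (w : seq X) (xi : word X).

Definition final q w : state M := foldl (@delta X M) q w.
Definition trace q w : seq (state M) := q :: scanl (@delta X M) q w.

Lemma final_cat q w1 w2 : final q (w1 ++ w2) = final (final q w1) w2.
Proof. exact: foldl_cat. Qed.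

Lemma trace_cat q w1 w2 : trace q (w1 ++ w2) = trace q w1 ++ scanl (@delta X M) (final q w1) w2.
Proof. by rewrite /trace scanl_cat. Qed.

Lemma nth_trace q0 q w j : j <= size w -> nth q0 (trace q w) j = final q (take j w).
Proof. by move=> hj; rewrite /trace nth_cons_scanl. Qed.

Lemma final_in_trace q w : final q w \in trace q w.
Proof.
by rewrite -[w in final q w]take_size -(nth_trace q) // mem_nth //= size_scanl.
Qed.

Lemma run_mkseq xi m : run M xi m = final (init M) (mkseq xi m).
Proof. by elim: m => [//|m IH]; rewrite mkseqS /= IH -cats1 final_cat. Qed.

Lemma run_segment xi m L :
  final (run M xi m) [seq xi i | i <- iota m L] = run M xi (m + L) /\
  trace (run M xi m) [seq xi i | i <- iota m L] = [seq run M xi i | i <- iota m L.+1].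
Proof.
elim: L m => [|L IH] m; first by rewrite addn0.
have [h1 h2] := IH m.+1.
by split; [rewrite /= -/(final _ _) h1 addSnnS | rewrite /trace /= -/(trace _ _) h2].
Qed.

Lemma in_fM xi r : r \in fM M xi <-> forall n, exists m, n <= m /\ run M xi m = r.
Proof. by rewrite inE; split => [/asboolP|?]; last apply/asboolP. Qed.

Lemma fM_eventually xi : exists N, forall m, N <= m -> run M xi m \in fM M xi.
Proof.
have H q : q \in enum (state M) -> exists s0, forall s, s0 <= s ->
    q \notin fM M xi -> run M xi s != q.
  move=> _; case: (boolP (q \in fM M xi)) => hq; first by exists 0.
  apply: contrapT => hne; case/negP: hq; apply/in_fM => n.
  apply: contrapT => hn; apply: hne; exists n => s hs _; apply/eqP => e; apply: hn.
  by exists s.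
have [N HN] := eventually_all_in H.
exists N => m hm; apply: contrapT => /negP hn.
by move: (HN m hm (run M xi m) (mem_enum _ _) hn); rewrite eqxx.
Qed.

Lemma fM_nonempty xi : exists r, r \in fM M xi.
Proof. by have [N HN] := fM_eventually xi; exists (run M xi N); exact: HN. Qed.

Lemma inCM_nonempty (d : {set state M}) : inCM d -> exists r, r \in d.
Proof. by move=> [xi <-]; exact: fM_nonempty. Qed.

Lemma fM_covering_walk xi p : p \in fM M xi -> exists w, [/\ w != [::],
  {subset trace p w <= fM M xi} & {subset fM M xi <= trace p w}].
Proof.
move=> hp; have [N HN] := fM_eventually xi.
have [m1 [hm1 e1]] := (proj1 (in_fM xi p) hp) N.
have H q : q \in enum (fM M xi) -> exists m, m1 < m /\ run M xi m = q.
  by rewrite mem_enum => hq; exact: (proj1 (in_fM xi q) hq) m1.+1.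
have [L HL] := bounded_witnesses H.
exists [seq xi i | i <- iota m1 L.+1].
rewrite -e1 (run_segment xi m1 L.+1).2; split => //.
  move=> r /mapP [i]; rewrite mem_iota => /andP [hi _] ->; apply: HN.
  exact: leq_trans hm1 hi.
move=> q hq; have [m hm [hm' <-]] := HL q ltac:(by rewrite mem_enum).
by apply: map_f; rewrite mem_iota (ltnW hm'); lia.
Qed.

Lemma fM_walk xi p q : p \in fM M xi -> q \in fM M xi -> exists w,
  {subset trace p w <= fM M xi} /\ final p w = q.
Proof.
move=> hp hq; have [N HN] := fM_eventually xi.
have [m1 [hm1 e1]] := (proj1 (in_fM xi p) hp) N.
have [m2 [hm2 e2]] := (proj1 (in_fM xi q) hq) m1.
exists [seq xi i | i <- iota m1 (m2 - m1)].
have [h1 h2] := run_segment xi m1 (m2 - m1); rewrite -e1 h1 h2 subnKC // e2; split => //.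
move=> r /mapP [i]; rewrite mem_iota => /andP [hi _] ->; apply: HN.
exact: leq_trans hm1 hi.
Qed.

Lemma reach_walkP p q : reach p q <-> exists w, final p w = q.
Proof.
split=> [/connectP [s]|[w <-]].
  elim: s p => [|a s IH] p /=; first by move=> _ ->; exists [::].
  move=> /andP [/existsP [x /eqP ea] hs] hq.
  by have [w hw] := IH a hs hq; exists (x :: w); rewrite /= -ea.
elim: w p => [|a w IH] p; first exact: connect0.
by apply: connect_trans (IH (delta p a)); apply: connect1; apply/existsP; exists a.
Qed.

Lemma reach_init_fM xi r : r \in fM M xi -> reach (init M) r.
Proof.
by move=> /in_fM /(_ 0) [m [_ <-]]; apply/reach_walkP; exists (mkseq xi m); rewrite run_mkseq.
Qed.

Lemma extend_to_covering_walk q w1 (e : {set state M}) : inCM e -> final q w1 \in e ->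
  exists w, [/\ w != [::], {subset e <= trace q w}, final q w \in e &
     forall r, r \in trace q w -> r \in trace q w1 \/ r \in e].
Proof.
move=> [xi <-] he; have [w2 [hn hs hc]] := fM_covering_walk he.
exists (w1 ++ w2); split.
- by move: hn; rewrite -!size_eq0 size_cat; lia.
- move=> r /hc; rewrite trace_cat /trace inE mem_cat => /orP [/eqP ->|->].
    by rewrite final_in_trace.
  by rewrite orbT.
- by rewrite final_cat; apply: hs; exact: final_in_trace.
- move=> r; rewrite trace_cat mem_cat => /orP [->|h]; first by left.
  by right; apply: hs; rewrite /trace inE h orbT.
Qed.

End Walks.

Section Approximation.
Variable X : Type.
Implicit Types (x y : word X) (p : seq X) (C : word X -> Prop) (D : nat -> word X -> Prop).

Lemma eq_mkseq_lt x y n s : (forall m, m < n -> x m = y m) -> s <= n -> mkseq x s = mkseq y s.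
Proof. by move=> h hs; apply/eq_in_map => i; rewrite mem_iota => hi; apply: h; lia. Qed.

Lemma take_mkseq_pred x s : take (size (mkseq x s)).-1 (mkseq x s) = mkseq x s.-1.
Proof. by rewrite size_mkseq /mkseq -map_take take_iota; congr (map _ (iota _ _)); lia. Qed.

Definition cylinder p y : Prop := mkseq y (size p) = p.

Lemma cylinder_mkseq x s y : cylinder (mkseq x s) y <-> forall m, m < s -> y m = x m.
Proof.
rewrite /cylinder size_mkseq; split => [e m hm | h]; last exact: eq_mkseq_lt h _.
by rewrite -(nth_mkseq (x 0) y hm) e nth_mkseq.
Qed.

Definition meets p C : bool := `[< exists y, cylinder p y /\ C y >].
Definition inside p C : bool := `[< forall y, cylinder p y -> C y >].

Lemma meets_mkseq x s C : C x -> meets (mkseq x s) C.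
Proof. by move=> hC; apply/asboolP; exists x; split => //; apply/cylinder_mkseq. Qed.

Lemma inside_mkseq x s C : inside (mkseq x s) C -> C x.
Proof. by move=> /asboolP; apply; apply/cylinder_mkseq. Qed.

Lemma closed_unmet x C : closedw C -> ~ C x ->
  exists m, forall s, m <= s -> ~~ meets (mkseq x s) C.
Proof.
move=> hc hx; have [n hn] := hc x hx; exists n => s hs; apply/negP => /asboolP [y [hy hC]].
by apply: (hn y) hC => m hm; apply: (proj1 (cylinder_mkseq _ _ _) hy); lia.
Qed.

Lemma open_inside x C : openw C -> C x ->
  exists m, forall s, m <= s -> inside (mkseq x s) C.
Proof.
move=> ho hx; have [n hn] := ho x hx; exists n => s hs; apply/asboolP => y hy.
by apply: hn => m hm; apply: (proj1 (cylinder_mkseq _ _ _) hy); lia.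
Qed.

(* Guesses the least [j] with [x \in D j] from a prefix of [x]: the guess can only be too
   small, it is eventually right when the [D j] are closed, and it diverges when [x] lies in
   no [D j]. *)
Definition first_meeting D p : nat := find (fun j => meets p (D j)) (iota 0 (size p)).

Lemma find_iota_ge (P : pred nat) s K : (forall j, j < K -> ~~ P j) -> K <= s ->
  K <= find P (iota 0 s).
Proof.
move=> hP hK; rewrite leqNgt; apply/negP => hf.
have hs : find P (iota 0 s) < size (iota 0 s) by rewrite size_iota; lia.
have := @nth_find _ 0 P (iota 0 s); rewrite has_find hs => /(_ isT).
rewrite nth_iota ?add0n; last by rewrite size_iota in hs.
by move=> hp; move: (hP _ hf); rewrite hp.
Qed.

Lemma find_iota_le (P : pred nat) s j : P j -> j < s -> find P (iota 0 s) <= j.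
Proof.
move=> hj hs; rewrite leqNgt; apply/negP => hf.
by have := @before_find _ 0 P (iota 0 s) j hf; rewrite nth_iota // hj.
Qed.

Lemma first_meeting_stable x D : (forall j, closedw (D j)) -> (exists j, D j x) ->
  exists j0, D j0 x /\ exists s0, forall s, s0 <= s -> first_meeting D (mkseq x s) = j0.
Proof.
move=> hc hex.
have hexb : exists j, `[< D j x >] by case: hex => j hj; exists j; apply/asboolP.
case: (ex_minnP hexb) => j0 /asboolP hj0 hmin.
have H j : j \in iota 0 j0 -> exists s0, forall s, s0 <= s -> ~~ meets (mkseq x s) (D j).
  rewrite mem_iota add0n => /andP [_ hj]; apply: closed_unmet => // hD.
  by have := hmin j (introT (asboolP _) hD); lia.
have [s1 hs1] := eventually_all_in H.
exists j0; split => //; exists (maxn s1 j0.+1) => s hs.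
rewrite /first_meeting size_mkseq; apply/eqP; rewrite eqn_leq; apply/andP; split.
  by apply: find_iota_le; [exact: meets_mkseq | lia].
apply: find_iota_ge; last by lia.
by move=> j hj; apply: hs1; [lia | rewrite mem_iota; lia].
Qed.

Lemma first_meeting_unbounded x D : (forall j, closedw (D j)) -> (forall j, ~ D j x) ->
  forall K, exists s0, forall s, s0 <= s -> K < first_meeting D (mkseq x s).
Proof.
move=> hc hn K.
have H j : j \in iota 0 K.+1 -> exists s0, forall s, s0 <= s -> ~~ meets (mkseq x s) (D j).
  by move=> _; apply: closed_unmet.
have [s1 hs1] := eventually_all_in H.
exists (maxn s1 K.+1) => s hs; rewrite /first_meeting size_mkseq.
apply: find_iota_ge; last by lia.
by move=> j hj; apply: hs1; [lia | rewrite mem_iota; lia].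
Qed.

End Approximation.

Section TreeGuess.
Variables (X : Type) (V : seq (seq nat)) (Cs : seq nat -> nat -> word X -> Prop).
Implicit Types (p : seq X) (rho sg : seq nat) (x : word X).

Definition children rho := [seq sg <- V | is_child rho sg].

(* The closed pieces of the sets of all children of [rho] in one sequence, so that a single
   guess picks a child. *)
Definition children_closed rho j :=
  Cs (nth rho (children rho) (j %% size (children rho))) (j %/ size (children rho)).

Definition guess_child p rho := first_meeting (children_closed rho) p.

(* The guess goes below [rho] only if the last letter of [p] did not change the child
   guessed at [rho]: a guess that keeps changing means that [x] lies in no child set. *)
Definition descends p rho :=
  (children rho != [::]) && (guess_child p rho == guess_child (take (size p).-1 p) rho).

Definition best_child p rho := nth rho (children rho) (guess_child p rho %% size (children rho)).

Fixpoint descend p n rho :=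
  if n is n'.+1 then (if descends p rho then descend p n' (best_child p rho) else rho) else rho.

Definition height := \max_(sg <- V) size sg.

Definition tree_guess p := descend p height.+1 [::].

Lemma mem_children rho sg : (sg \in children rho) = (sg \in V) && is_child rho sg.
Proof. by rewrite mem_filter andbC. Qed.

Lemma nth_children rho j : children rho != [::] ->
  nth rho (children rho) (j %% size (children rho)) \in children rho.
Proof. by move=> hch; apply: mem_nth; apply: ltn_pmod; rewrite lt0n size_eq0. Qed.

Lemma children_closedP rho sg x : sg \in children rho -> (exists n, Cs sg n x) ->
  exists j, children_closed rho j x.
Proof.
move=> hsg [n hn]; have hi : index sg (children rho) < size (children rho) by rewrite index_mem.
exists (n * size (children rho) + index sg (children rho)).
rewrite /children_closed modnMDl (modn_small hi) divnMDl; last by lia.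
by rewrite (divn_small hi) addn0 nth_index.
Qed.

Lemma size_le_height sg : sg \in V -> size sg <= height.
Proof. by move=> h; exact: (@leq_bigmax_seq _ _ xpredT size sg h). Qed.

Lemma descends_child p rho : descends p rho ->
  best_child p rho \in V /\ is_child rho (best_child p rho).
Proof. by move=> /andP [hch _]; apply/andP; rewrite -mem_children; exact: nth_children. Qed.

Lemma descends_size p rho : descends p rho -> size rho < height.
Proof.
move=> hd; have [hb /andP [/eqP hbs _]] := descends_child hd.
by have := size_le_height hb; rewrite hbs.
Qed.

Lemma descend_prefix p n rho : prefix rho (descend p n rho).
Proof.
elim: n rho => [|n IH] rho /=; first exact: prefix_refl.
case: ifP => hd; last exact: prefix_refl.
by have [_ /andP [_ h]] := descends_child hd; exact: prefix_trans h (IH _).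
Qed.

Lemma descend_in p n rho : rho \in V -> descend p n rho \in V.
Proof.
elim: n rho => [|n IH] rho //= h; case: ifP => hd //.
by apply: IH; exact: (descends_child hd).1.
Qed.

Lemma descend_passes p n rho0 rho : prefix rho0 rho -> prefix rho (descend p n rho0) ->
  rho != descend p n rho0 -> descends p rho /\ prefix (best_child p rho) (descend p n rho0).
Proof.
elim: n rho0 => [|n IH] rho0 h1 h2 h3 /=.
  by move: h3; rewrite /= (prefix_size_eq h1 (size_prefix h2)) eqxx.
move: h2 h3; rewrite /=; case: ifP => hd h2 h3; last first.
  by move: h3; rewrite (prefix_size_eq h1 (size_prefix h2)) eqxx.
have [_ /andP [/eqP hbs _]] := descends_child hd.
case: (eqVneq rho rho0) => [->|hne]; first by split => //; exact: descend_prefix.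
apply: IH => //; apply: prefix_size_le (descend_prefix _ _ _) h2 _.
rewrite hbs ltnNge; apply/negP => hs.
by move: hne; rewrite (prefix_size_eq h1 hs) eqxx.
Qed.

Lemma descend_stops p n rho0 :
  ~~ descends p (descend p n rho0) \/ size (descend p n rho0) = size rho0 + n.
Proof.
elim: n rho0 => [|n IH] rho0 /=; first by right; rewrite addn0.
case: ifP => hd; last by left; rewrite hd.
have [_ /andP [/eqP hbs _]] := descends_child hd.
by case: (IH (best_child p rho0)) => h; [left | right; rewrite h hbs addSnnS].
Qed.

Lemma tree_guess_in p : [::] \in V -> tree_guess p \in V.
Proof. exact: descend_in. Qed.

Lemma tree_guess_final p : ~~ descends p (tree_guess p).
Proof.
case: (descend_stops p height.+1 [::]) => // h; apply/negP => hd.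
by have := descends_size hd; rewrite /tree_guess h /=; lia.
Qed.

Lemma tree_guess_descends p rho : prefix rho (tree_guess p) -> descends p rho ->
  prefix (best_child p rho) (tree_guess p).
Proof.
move=> h hd; have hne : rho != tree_guess p.
  by apply/eqP => e; move: (tree_guess_final p); rewrite -e hd.
exact: (descend_passes (prefix0s rho) h hne).2.
Qed.

Lemma tree_guess_stops_at p rho : prefix rho (tree_guess p) -> ~~ descends p rho ->
  tree_guess p = rho.
Proof.
move=> h hd; apply/eqP; rewrite eq_sym; apply: contraNT hd => hne.
exact: (descend_passes (prefix0s rho) h hne).1.
Qed.

Section Limit.
Variable x : word X.
Hypothesis Cs_closed : forall sg n, sg \in V -> closedw (Cs sg n).

Definition guessed_below rho :=
  exists s0, forall s, s0 <= s -> prefix rho (tree_guess (mkseq x s)).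

Lemma children_closed_closed rho : children rho != [::] ->
  forall j, closedw (children_closed rho j).
Proof.
move=> hch j; apply: Cs_closed.
by have := nth_children j hch; rewrite mem_children => /andP [].
Qed.

Lemma tree_guess_enters_child rho : children rho != [::] -> guessed_below rho ->
  (exists j, children_closed rho j x) ->
  exists2 c0 : seq nat, c0 \in children rho /\ (exists n, Cs c0 n x) & guessed_below c0.
Proof.
move=> hch [s0 hs0] hex.
have [j0 [hj0 [s1 hs1]]] := first_meeting_stable (children_closed_closed hch) hex.
exists (nth rho (children rho) (j0 %% size (children rho))).
  by split; [exact: nth_children | exists (j0 %/ size (children rho))].
exists (maxn s0 s1.+1) => s hs.
have hd : descends (mkseq x s) rho.
  by rewrite /descends hch /guess_child take_mkseq_pred !hs1 //; lia.
have := tree_guess_descends (hs0 s ltac:(lia)) hd.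
by rewrite /best_child /guess_child hs1 //; lia.
Qed.

Lemma tree_guess_returns rho : children rho != [::] -> guessed_below rho ->
  (forall j, ~ children_closed rho j x) ->
  forall n, exists2 s, n <= s & tree_guess (mkseq x s) = rho.
Proof.
move=> hch [s0 hs0] hnone n; apply: contrapT => hno.
set N := maxn n s0.
have hd s : N <= s -> descends (mkseq x s) rho.
  move=> hs; apply: contrapT => /negP hnd; apply: hno; exists s; first by lia.
  by apply: tree_guess_stops_at => //; apply: hs0; lia.
have hconst d : guess_child (mkseq x (N + d)) rho = guess_child (mkseq x N) rho.
  elim: d => [|d IH]; first by rewrite addn0.
  have /andP [_ /eqP ->] := hd (N + d.+1) (leq_addr _ _).
  by rewrite take_mkseq_pred addnS.
have [s2 hs2] := first_meeting_unbounded (children_closed_closed hch) hnone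
  (guess_child (mkseq x N) rho).
by have := hs2 (N + s2) (leq_addl _ _); rewrite -/(guess_child _ rho) hconst ltnn.
Qed.

Lemma tree_guess_step rho : guessed_below rho ->
  (exists2 c0 : seq nat, c0 \in children rho /\ (exists n, Cs c0 n x) & guessed_below c0) \/
  ((forall sg, sg \in children rho -> ~ exists n, Cs sg n x) /\
   forall n, exists2 s, n <= s & tree_guess (mkseq x s) = rho).
Proof.
move=> hev; case: (eqVneq (children rho) [::]) => hch.
  right; split => [sg|n]; first by rewrite hch.
  case: hev => s0 hs0; exists (maxn n s0); first exact: leq_maxl.
  by apply: tree_guess_stops_at; [apply: hs0; exact: leq_maxr | rewrite /descends hch].
case: (pselect (exists j, children_closed rho j x)) => hex.
  by left; exact: tree_guess_enters_child.
right; split; last by apply: tree_guess_returns => // j hj; apply: hex; exists j.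
by move=> sg hsg hB; apply: hex; exact: children_closedP hB.
Qed.

Lemma tree_guess_limit rho : rho \in V -> (exists n, Cs rho n x) -> guessed_below rho ->
  exists sg, [/\ sg \in V, exists n, Cs sg n x,
    forall i, rcons sg i \in V -> ~ exists n, Cs (rcons sg i) n x,
    guessed_below sg & forall n, exists2 s, n <= s & tree_guess (mkseq x s) = sg].
Proof.
move: {2}(height - size rho) (leqnn (height - size rho)) => d.
elim: d rho => [|d IH] rho hd hrho hB hev;
  case: (tree_guess_step hev) => [[c0 [hc0 hBc] hevc]|[hleaf hinf]];
  try by exists rho; split => // i hi; apply: hleaf; rewrite mem_children hi is_child_rcons.
all: move: hc0; rewrite mem_children => /andP [hc0V /andP [/eqP /= hsz _]].
all: have := size_le_height hc0V.
- by move=> hh; exfalso; lia.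
- by move=> hh; apply: (IH c0) => //; lia.
Qed.

End Limit.
End TreeGuess.

Section Reduction.
Variables (X : finType) (M : automaton X) (F : seq (seq nat)) (V : seq nat -> seq (seq nat)).
Variables (U : seq nat -> word X -> Prop) (Bs : seq nat -> seq nat -> word X -> Prop).
Variable Cs : seq nat -> seq nat -> nat -> word X -> Prop.
Variables (phi : seq nat -> {set state M}) (psi : seq nat -> seq nat -> {set state M}).
Implicit Types (x : word X) (p w : seq X) (q : state M) (tau sg : seq nat).

Definition guess tau p := tree_guess (V tau) (Cs tau) p.

Definition covering_block q (osp : option (seq nat)) tau sg w :=
  [/\ w != [::], {subset psi tau sg <= trace q w}, final q w \in psi tau sg &
      forall sp, osp = Some sp -> {subset trace q w <= psi tau (lcp sp sg)}].

(* [(None, q)]: no node of [F] entered yet; [(Some (tau, osp), q)]: the current node [tau]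
   of [F] and the last guess [osp] in the tree of [tau] ([None] right after entering [tau]);
   [q] is the state reached by the automaton on the output written so far. *)
Definition config := (option (seq nat * option (seq nat)) * state M)%type.

Definition candidates p (cf : config) :=
  [seq t <- F | (if cf.1 is Some (tau, _) then is_child tau t else true) && inside p (U t)].

Definition step p (cf : config) : config * seq X :=
  if candidates p cf is t :: _ then
    let w := classical_sets.xget [::] (fun w => final cf.2 w \in phi t) in
    ((Some (t, None), final cf.2 w), w)
  else if cf.1 is Some (tau, osp) then
    let sg := guess tau p in
    if sg \in V tau then
      let w := classical_sets.xget [::] (covering_block cf.2 osp tau sg) in
      ((Some (tau, Some sg), final cf.2 w), w)
    else (cf, [::])
  else (cf, [::]).

Fixpoint config_at x s : config :=
  if s is s'.+1 then (step (mkseq x s') (config_at x s')).1 else (None, init M).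

Definition block x s := (step (mkseq x s) (config_at x s)).2.

Fixpoint output x s := if s is s'.+1 then output x s' ++ block x s' else [::].

Lemma step_state p cf : (step p cf).1.2 = final cf.2 (step p cf).2.
Proof.
rewrite /step; case: (candidates p cf) => [|t l] //=.
by case: cf.1 => [[tau osp]|] //=; case: ifP.
Qed.

Lemma config_state x s : (config_at x s).2 = final (init M) (output x s).
Proof. by elim: s => [//|s IH] /=; rewrite step_state final_cat -IH. Qed.

Lemma config_local x y n : (forall m, m < n -> x m = y m) -> forall s, s <= n ->
  config_at x s = config_at y s /\ output x s = output y s.
Proof.
move=> h; elim=> [//|s IH] hs /=.
have [e1 e2] := IH (ltnW hs).
by rewrite /block e1 e2 (eq_mkseq_lt h (ltnW hs)).
Qed.

Lemma output_prefix x s t : s <= t -> exists r, output x t = output x s ++ r.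
Proof.
move=> /subnK <-; elim: (t - s) => [|d [r IH]]; first by exists [::]; rewrite cats0.
by exists (r ++ block x (d + s)); rewrite addSn /= IH catA.
Qed.

Lemma size_output_mono x s t : s <= t -> size (output x s) <= size (output x t).
Proof. by move=> h; have [r ->] := output_prefix x h; rewrite size_cat leq_addr. Qed.

Lemma nth_output x s t m d d' : m < size (output x s) -> m < size (output x t) ->
  nth d (output x s) m = nth d' (output x t) m.
Proof.
wlog hst : s t d d' / s <= t.
  move=> W h1 h2; case: (leqP s t) => h; first exact: W.
  by apply/esym; apply: W => //; exact: ltnW.
move=> h1 h2; have [r e] := output_prefix x hst; rewrite e nth_cat h1.
exact: set_nth_default.
Qed.

(* The value [x 0] is junk: the output turns out to be infinite for every [x]. *)
Definition reduction x n : X :=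
  if pselect (exists s, n < size (output x s)) is left h
  then nth (x 0) (output x (xchoose h)) n else x 0.

Lemma reduction_nth x s m : m < size (output x s) -> reduction x m = nth (x 0) (output x s) m.
Proof.
move=> h; rewrite /reduction; case: pselect => [h'|[]]; last by exists s.
exact: nth_output (xchooseP h') h.
Qed.

Lemma mkseq_reduction x s m : m <= size (output x s) ->
  mkseq (reduction x) m = take m (output x s).
Proof.
move=> hm; apply: (@eq_from_nth _ (x 0)); first by rewrite size_mkseq size_takel.
move=> i; rewrite size_mkseq => hi.
by rewrite nth_mkseq // nth_take // (reduction_nth (_ : i < size (output x s))) //; lia.
Qed.

Lemma run_reduction x s j : j <= size (block x s) ->
  run M (reduction x) (size (output x s) + j) = nth (init M) (trace (config_at x s).2 (block x s)) j.
Proof.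
move=> hj; rewrite run_mkseq (@mkseq_reduction x s.+1); last by rewrite /= size_cat leq_add2l.
by rewrite /= take_cat ltnNge leq_addr /= addKn final_cat -config_state nth_trace.
Qed.

Hypothesis phi_inCM : forall tau, tau \in F -> inCM (phi tau).
Hypothesis phi_le0 : forall tau tau', tau \in F -> tau' \in F -> prefix tau tau' ->
  le0 (phi tau) (phi tau').
Hypothesis psi_class : forall tau sg, tau \in F -> sg \in V tau ->
  in_class0 (phi tau) (psi tau sg).
Hypothesis psi_le1 : forall tau sg sg', tau \in F -> sg \in V tau -> sg' \in V tau ->
  prefix sg sg' -> le1 (psi tau sg) (psi tau sg').
Hypothesis V_tree : forall tau, tau \in F -> is_tree (V tau).

Definition invariant x (cf : config) : Prop :=
  match cf with
  | (None, q) => q = init M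
  | (Some (tau, osp), q) => [/\ tau \in F, U tau x, (forall r, r \in phi tau -> reach q r) &
       forall sg, osp = Some sg -> sg \in V tau /\ q \in psi tau sg]
  end.

Lemma mem_candidates p cf t l : candidates p cf = t :: l ->
  [/\ t \in F, inside p (U t) & is_true (if cf.1 is Some (tau, _) then is_child tau t else true)].
Proof.
move=> e; have : t \in candidates p cf by rewrite e mem_head.
by rewrite mem_filter => /andP [/andP [h1 h2] h3].
Qed.

Lemma psi_antitone tau sg sg' : tau \in F -> sg \in V tau -> sg' \in V tau -> prefix sg sg' ->
  {subset psi tau sg' <= psi tau sg}.
Proof. by move=> hF h1 h2 hp; apply/subsetP; exact: psi_le1 hF h1 h2 hp. Qed.

Lemma covering_block_exists x tau osp q sg : invariant x (Some (tau, osp), q) ->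
  sg \in V tau -> exists w, covering_block q osp tau sg w.
Proof.
case=> hF _ hreach hosp hsg.
have [hC hE] := psi_class hF hsg.
have [p hp] := inCM_nonempty hC.
case: osp hosp => [sp|] hosp.
- have [hsp hq] := hosp sp erefl.
  have hrho : lcp sp sg \in V tau := V_tree hF hsg (lcp_prefixr sp sg).
  (* [psi tau (lcp sp sg)] is some [fM M xi], hence strongly connected, and it contains
     both the current state and [psi tau sg]. *)
  have [xi hxi] := (psi_class hF hrho).1.
  have sub1 := psi_antitone hF hrho hsp (lcp_prefixl sp sg).
  have sub2 := psi_antitone hF hrho hsg (lcp_prefixr sp sg).
  have hq' : q \in fM M xi by rewrite hxi; apply: sub1.
  have hp' : p \in fM M xi by rewrite hxi; apply: sub2.
  have [w1 [hs1 hf1]] := fM_walk hq' hp'.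
  have hfp : final q w1 \in psi tau sg by rewrite hf1.
  have [w [hn hc hfin hst]] := extend_to_covering_walk hC hfp.
  exists w; split => // _ [<-] r /hst [/hs1|/sub2 //]; by rewrite hxi.
- have [r hr] := inCM_nonempty (phi_inCM hF).
  have [w1 hf1] := (reach_walkP _ _).1 (connect_trans (hreach r hr) (hE.2 r p hr hp)).
  have hfp : final q w1 \in psi tau sg by rewrite hf1.
  have [w [hn hc hfin _]] := extend_to_covering_walk hC hfp.
  by exists w; split.
Qed.

Lemma invariant_step x s cf : invariant x cf -> invariant x (step (mkseq x s) cf).1.
Proof.
rewrite /step; case e: (candidates (mkseq x s) cf) => [|t l].
  case: cf e => [[[tau osp]|] q] e //= hI.
  case: ifP => // hsg /=.
  have := classical_sets.xgetPex [::] (covering_block_exists hI hsg).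
  set w := classical_sets.xget _ _; case=> hn hc hfin hst.
  case: hI => hF hU hreach _; split => //; last by move=> sg' [<-].
  by move=> r hr; have [_ hE] := psi_class hF hsg; exact: hE.1 _ _ hfin hr.
have [ht hd hch] := mem_candidates e.
move=> hI /=.
have [r' hr'] := inCM_nonempty (phi_inCM ht).
have hreach : reach cf.2 r'.
  case: cf hI hch {e} => [[[tau osp]|] q] /=.
    case=> hF _ hre _ /is_childP [i ei].
    have [r hr] := inCM_nonempty (phi_inCM hF).
    apply: connect_trans (hre r hr) _; apply: (phi_le0 hF ht) hr hr'.
    by rewrite ei prefix_rcons.
  by move=> -> _; have [xi hxi] := phi_inCM ht; rewrite -hxi in hr'; exact: reach_init_fM hr'.
have [w1 hw1] := (reach_walkP _ _).1 hreach.
have hw1' : final cf.2 w1 \in phi t by rewrite hw1.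
have := classical_sets.xgetPex [::] (ex_intro (fun w => final cf.2 w \in phi t) w1 hw1').
set w := classical_sets.xget _ _ => hfin.
split => //; first exact: inside_mkseq hd.
by move=> r hr; exact: (phi_le0 ht ht (prefix_refl t)) hfin hr.
Qed.

Lemma invariant_config x s : invariant x (config_at x s).
Proof. by elim: s => [//|s IH] /=; apply: invariant_step. Qed.

Definition node (cf : config) := if cf.1 is Some (t, _) then Some t else None.
Definition depth (cf : config) := if node cf is Some t then (size t).+1 else 0.

Lemma step_node p cf : (candidates p cf = [::] /\ node (step p cf).1 = node cf) \/
  (exists t l, candidates p cf = t :: l /\ node (step p cf).1 = Some t).
Proof.
rewrite /step; case e: (candidates p cf) => [|t l]; last by right; exists t, l.
by left; split => //; case: cf e => [[[tau osp]|] q] e //=; case: ifP.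
Qed.

Lemma depth_step p cf : candidates p cf != [::] -> depth cf < depth (step p cf).1.
Proof.
case: (step_node p cf) => [[-> //]|[t [l [e1 e2]]]] _.
have [_ _ hch] := mem_candidates e1.
rewrite /depth e2; case: cf hch {e1 e2} => [[[tau osp]|] q] //= /andP [/eqP -> _].
by rewrite ltnSn.
Qed.

Lemma depth_step_le p cf : depth cf <= depth (step p cf).1.
Proof.
case: (step_node p cf) => [[_ e]|[t [l [e _]]]]; first by rewrite /depth e.
by apply/ltnW/depth_step; rewrite e.
Qed.

Lemma candidates_eventually_nil x :
  exists s0, forall s, s0 <= s -> candidates (mkseq x s) (config_at x s) = [::].
Proof.
pose R s := depth (config_at x s).
have R_mono s : R s <= R s.+1 by exact: depth_step_le.
have R_bound s : R s <= (\max_(t <- F) size t).+1.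
  rewrite /R /depth /node; have := invariant_config x s.
  case: (config_at x s) => [[[t osp]|] q] //= [hF _ _ _].
  by rewrite ltnS; exact: (@leq_bigmax_seq _ _ xpredT size t hF).
have [s0 hs0] := nondecreasing_bounded_stable R_mono R_bound.
exists s0 => s hs; apply/eqP; apply: contraT => /depth_step.
by rewrite -/(R s) -[(step _ _).1]/(config_at x s.+1) -/(R s.+1) !hs0 ?ltnn //; lia.
Qed.

Hypothesis U_open : forall t, t \in F -> openw (U t).
Hypothesis U_cover : forall x, exists2 t, t \in F & U t x.

Lemma node_eventually_fixed x : exists tau s0, [/\ tau \in F, Utilde F U tau x &
  forall s, s0 <= s -> candidates (mkseq x s) (config_at x s) = [::] /\
    exists osp, (config_at x s).1 = Some (tau, osp)].
Proof.
have [s0 hnc] := candidates_eventually_nil x.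
have hnode s : s0 <= s -> node (config_at x s) = node (config_at x s0).
  move=> /subnKC <-; elim: (s - s0) => [|d IH]; first by rewrite addn0.
  rewrite addnS /=; case: (step_node (mkseq x (s0 + d)) (config_at x (s0 + d))) => [[_ ->]|] //.
  by move=> [t [l [e _]]]; rewrite hnc in e; [|exact: leq_addr].
have no_candidate s t : s0 <= s -> t \in F -> inside (mkseq x s) (U t) ->
    (if (config_at x s).1 is Some (tau, _) then is_child tau t else true) -> False.
  move=> hs ht hd hc; have : t \in candidates (mkseq x s) (config_at x s).
    by rewrite mem_filter hc hd ht.
  by rewrite hnc.
case e0: (node (config_at x s0)) => [tau|]; last first.
  exfalso; have [t ht hU] := U_cover x; have [n hn] := open_inside (U_open ht) hU.
  apply: (no_candidate (maxn s0 n) t (leq_maxl _ _) ht (hn _ (leq_maxr _ _))).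
  have := hnode (maxn s0 n) (leq_maxl _ _); rewrite e0 /node.
  by case: (config_at x (maxn s0 n)) => [[[]|] ?].
have hSome s : s0 <= s -> exists osp, (config_at x s).1 = Some (tau, osp).
  move=> hs; have := hnode s hs; rewrite e0 /node.
  by case: (config_at x s) => [[[t osp]|] q] //= [->]; exists osp.
have [osp0 hosp0] := hSome s0 (leqnn _).
have [hF hUx _ _] : invariant x (Some (tau, osp0), (config_at x s0).2).
  by rewrite -hosp0; case: (config_at x s0) (invariant_config x s0).
exists tau, s0; split => //; last by move=> s hs; split; [exact: hnc | exact: hSome].
split => // i hi hU; have [n hn] := open_inside (U_open hi) hU.
apply: (no_candidate (maxn s0 n) _ (leq_maxl _ _) hi (hn _ (leq_maxr _ _))).
by have [osp ->] := hSome (maxn s0 n) (leq_maxl _ _); exact: is_child_rcons.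
Qed.

Lemma guess_block x tau s0 : [::] \in V tau ->
  (forall s, s0 <= s -> candidates (mkseq x s) (config_at x s) = [::] /\
    exists osp, (config_at x s).1 = Some (tau, osp)) ->
  forall s, s0 <= s -> exists osp, [/\ (config_at x s).1 = Some (tau, osp),
    covering_block (config_at x s).2 osp tau (guess tau (mkseq x s)) (block x s) &
    (config_at x s.+1).1 = Some (tau, Some (guess tau (mkseq x s)))].
Proof.
move=> hroot hfix s hs; have [hnc [osp hosp]] := hfix s hs; exists osp.
have hI := invariant_config x s.
have hgV : guess tau (mkseq x s) \in V tau by exact: tree_guess_in.
rewrite /block /=; move: hI hnc; case: (config_at x s) hosp => cf1 q /= -> hI hnc.
rewrite /step hnc /= hgV; split => //.
exact: classical_sets.xgetPex (covering_block_exists hI hgV).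
Qed.

Hypothesis Cs_closed : forall tau sg n, tau \in F -> sg \in V tau -> closedw (Cs tau sg n).
Hypothesis Bs_Cs : forall tau sg x, tau \in F -> sg \in V tau ->
  Bs tau sg x <-> exists n, Cs tau sg n x.
Hypothesis Utilde_Uts : forall tau, tau \in F -> forall x,
  Utilde F U tau x <-> exists2 sg, sg \in V tau & Uts F U Bs tau sg x.
Hypothesis Uts_nested : forall tau sg i, tau \in F -> sg \in V tau -> rcons sg i \in V tau ->
  forall x, Uts F U Bs tau (rcons sg i) x -> Uts F U Bs tau sg x.

Lemma Uts_root x tau sg : tau \in F -> sg \in V tau -> Uts F U Bs tau sg x ->
  Uts F U Bs tau [::] x.
Proof.
move=> hF; elim/last_ind: sg => [//|sg i IH] hV hU.
have hV' : sg \in V tau := V_tree hF hV (prefix_rcons sg i).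
exact: IH hV' (Uts_nested hF hV' hV hU).
Qed.

Definition leaf_region tau sg x := [/\ tau \in F, sg \in V tau, Uts F U Bs tau sg x &
  forall i, rcons sg i \in V tau -> ~ Uts F U Bs tau (rcons sg i) x].

Lemma output_settles x : exists tau sg s0, [/\ leaf_region tau sg x,
  (forall s, s0 <= s ->
     block x s != [::] /\ {subset trace (config_at x s).2 (block x s) <= psi tau sg}) &
  (forall n, exists2 s, n <= s & {subset psi tau sg <= trace (config_at x s).2 (block x s)})].
Proof.
have [tau [s0 [hF hUt hfix]]] := node_eventually_fixed x.
have [sg0 hsg0 hUts0] := (Utilde_Uts hF x).1 hUt.
have hroot : [::] \in V tau := V_tree hF hsg0 (prefix0s _).
have hB0 : exists n, Cs tau [::] n x.
  by apply/(Bs_Cs _ hF hroot); exact: (Uts_root hF hsg0 hUts0).2.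
have hclosed sg n : sg \in V tau -> closedw (Cs tau sg n) by exact: Cs_closed.
have [sg [hsgV hBs hleaf [s1 hs1] hinf]] :=
  tree_guess_limit hclosed hroot hB0 (ex_intro _ 0 (fun s _ => prefix0s _)).
have hblock := guess_block hroot hfix.
exists tau, sg, (maxn s0 s1).+1; split.
- split => //; first by split => //; apply/(Bs_Cs _ hF hsgV).
  by move=> i hi [_ /(Bs_Cs _ hF hi)]; exact: hleaf.
- move=> s hs.
  have [osp [h1 [hn hc hfin hst] _]] := hblock s ltac:(lia).
  have [osp' [_ _ h3]] := hblock s.-1 ltac:(lia).
  rewrite prednK in h3; last by lia.
  rewrite h1 in h3; case: h3 => eosp; split => // r /(hst _ eosp).
  set a := guess tau (mkseq x s.-1); set b := guess tau (mkseq x s).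
  have hl : lcp a b \in V tau := V_tree hF (tree_guess_in _ _ hroot) (lcp_prefixr a b).
  have hpl : prefix sg (lcp a b) by apply: prefix_lcp; apply: hs1; lia.
  exact: psi_antitone hF hsgV hl hpl r.
- move=> n; have [s hs es] := hinf (maxn n s0).
  exists s; first by lia.
  have [osp [_ [_ hc _ _] _]] := hblock s ltac:(lia).
  by rewrite -es.
Qed.

Lemma output_unbounded x n : exists s, n <= size (output x s).
Proof.
have [tau [sg [s0 [_ hne _]]]] := output_settles x.
suff grow d : d <= size (output x (s0 + d)) by exists (s0 + n).
elim: d => [//|d IH]; rewrite addnS /= size_cat.
have := (hne (s0 + d) (leq_addr _ _)).1; rewrite -size_eq0 -lt0n => h.
by rewrite -addn1; exact: leq_add IH h.
Qed.

Lemma reduction_continuous : continuousw reduction.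
Proof.
move=> Y hY x hYx; have [n hn] := hY (reduction x) hYx.
have [s hs] := output_unbounded x n.
exists s => y hy; apply: hn => m hm.
have [_ e] := config_local hy (leqnn s).
rewrite (reduction_nth (_ : m < size (output y s))); last by rewrite e; lia.
rewrite (reduction_nth (_ : m < size (output x s))); last by lia.
by rewrite e; apply: set_nth_default; lia.
Qed.

Lemma run_reduction_in_block x s0 m : size (output x s0) <= m ->
  exists2 s, s0 <= s & run M (reduction x) m \in trace (config_at x s).2 (block x s).
Proof.
move=> hm; have [t ht] := output_unbounded x m.+1.
case: (ex_minnP (ex_intro (fun t => m < size (output x t)) t ht)) => t0 ht0 hmin.
have ht0p : s0 < t0.
  by rewrite ltnNge; apply/negP => h; have := size_output_mono x h; lia.
have hle : size (output x t0.-1) <= m.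
  by rewrite leqNgt; apply/negP => h; have := hmin _ h; lia.
move: ht0; rewrite -(prednK (leq_ltn_trans (leq0n _) ht0p)) /= size_cat => ht0.
exists t0.-1; first by lia.
rewrite -(subnKC hle) run_reduction; last by lia.
by apply: mem_nth; rewrite /= size_scanl; lia.
Qed.

Lemma fM_reduction x : exists tau sg, leaf_region tau sg x /\ fM M (reduction x) = psi tau sg.
Proof.
have [tau [sg [s0 [hleaf hblk hinf]]]] := output_settles x.
exists tau, sg; split => //; apply/setP => r; apply/idP/idP.
  move=> /in_fM /(_ (size (output x s0))) [m [hm <-]].
  have [s hs hin] := run_reduction_in_block hm.
  exact: (hblk s hs).2.
move=> hr; apply/in_fM => n; have [t ht] := output_unbounded x n.
have [s hs hsub] := hinf (maxn s0 t).
have hr' := hsub r hr.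
exists (size (output x s) + index r (trace (config_at x s).2 (block x s))); split.
  by have := size_output_mono x (_ : t <= s); lia.
rewrite run_reduction ?nth_index //.
by move: hr'; rewrite -index_mem /trace /= size_scanl ltnS.
Qed.

Lemma exists_reduction : exists g, continuousw g /\
  forall x, exists tau sg, leaf_region tau sg x /\ fM M (g x) = psi tau sg.
Proof. by exists reduction; split; [exact: reduction_continuous | exact: fM_reduction]. Qed.

End Reduction.

Lemma h_le_choice (X : finType) (M : automaton X) k (A : {set state M} -> 'I_k)
    (F : seq (seq nat)) (c : seq nat -> ltree k) :
  h_le A F c -> exists (phi : seq nat -> {set state M}) (psi : seq nat -> seq nat -> {set state M}),
  [/\ forall tau, tau \in F -> inCM (phi tau),
      forall tau tau', tau \in F -> tau' \in F -> prefix tau tau' -> le0 (phi tau) (phi tau'),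
      forall tau sg, tau \in F -> sg \in (c tau).1 -> in_class0 (phi tau) (psi tau sg),
      forall tau sg sg', tau \in F -> sg \in (c tau).1 -> sg' \in (c tau).1 -> prefix sg sg' ->
        le1 (psi tau sg) (psi tau sg') &
      forall tau sg, tau \in F -> sg \in (c tau).1 -> (c tau).2 sg = A (psi tau sg)].
Proof.
move=> [phi [phi_inCM [phi_le0 hpsi]]].
have H tau : exists ps : seq nat -> {set state M}, tau \in F ->
    [/\ forall sg, sg \in (c tau).1 -> in_class0 (phi tau) (ps sg),
        forall sg sg', sg \in (c tau).1 -> sg' \in (c tau).1 -> prefix sg sg' ->
          le1 (ps sg) (ps sg') &
        forall sg, sg \in (c tau).1 -> (c tau).2 sg = A (ps sg)].
  case: (boolP (tau \in F)) => h; last by exists (fun _ => set0).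
  by have [ps [h1 [h2 h3]]] := hpsi tau h; exists ps.
have [psi hpsi'] := choice H; exists phi, psi; split => // tau.
- by move=> sg hF; have [h _ _] := hpsi' tau hF; exact: h.
- by move=> sg sg' hF; have [_ h _] := hpsi' tau hF; exact: h.
- by move=> sg hF; have [_ _ h] := hpsi' tau hF; exact: h.
Qed.

Lemma sigma02_choice (X I : Type) (P : I -> Prop) (S : I -> word X -> Prop) :
  (forall i, P i -> sigma02 (S i)) ->
  exists Cs : I -> nat -> word X -> Prop, forall i, P i ->
    (forall n, closedw (Cs i n)) /\ (forall x, S i x <-> exists n, Cs i n x).
Proof.
move=> hS; have H i : exists C : nat -> word X -> Prop, P i ->
    (forall n, closedw (C n)) /\ (forall x, S i x <-> exists n, C n x).
  case: (pselect (P i)) => h; last by exists (fun _ _ => False).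
  by have [C hC] := hS i h; exists C.
by have [Cs hCs] := choice H; exists Cs.
Qed.

Theorem lemma4p7 (X : finType) (k : nat) (M : automaton X)
    (A : {set state M} -> 'I_k) (F : seq (seq nat)) (c : seq nat -> ltree k) :
  1 < #|X| -> 1 < k -> is_lforest F c -> h_le A F c ->
  forall B : word X -> 'I_k, SigmaF F c B -> le_CA B (A \o @fM X M).
Proof.
(* The reduction works over any alphabet and for any number of labels. *)
move=> _ _ [_ V_tree] /h_le_choice [phi [psi [phi_inCM phi_le0 psi_class psi_le1 labels]]].
move=> B [U [Bs [[U_open [_ [U_cover hT]]] hdet]]].
have [Cs hCs] := sigma02_choice
  (P := fun ts => ts.1 \in F /\ ts.2 \in (c ts.1).1) (S := fun ts => Bs ts.1 ts.2)
  (fun ts hts => (hT _ hts.1).1 _ hts.2).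
have [g [g_cont g_fM]] := @exists_reduction X M F (fun tau => (c tau).1) U Bs
  (fun tau sg => Cs (tau, sg)) phi psi phi_inCM phi_le0 psi_class psi_le1 V_tree U_open U_cover
  (fun tau sg n hF hsg => (hCs (tau, sg) (conj hF hsg)).1 n)
  (fun tau sg x hF hsg => (hCs (tau, sg) (conj hF hsg)).2 x)
  (fun tau hF => (hT tau hF).2.2) (fun tau sg i hF => (hT tau hF).2.1 sg i).
exists g; split => //; apply: funext => x /=.
have [tau [sg [[hF hsg hUts hleaf] ->]]] := g_fM x.
by rewrite -labels //; exact: hdet.
Qed.
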